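(* (a) Let QHC$^-$ be the calculus with the same language as QHC whose deductive system consists only of classical predicate logic applied to all propositions, intuitionistic predicate logic applied to all problems, the rules $p\,/\,!p$ and $\alpha\,/\,?\alpha$, and the schemas $?!p\to p$, $\alpha\to\, !?\alpha$, $!(p\to q)\to(!p\to !q)$, $?(\alpha\to\beta)\to(?\alpha\to ?\beta)$, $!0\to\bot$. Then the following schemas are derivable in QHC$^-$: $?(\alpha\land\beta)\leftrightarrow ?\alpha\land ?\beta$; $?(\alpha\lor\beta)\leftrightarrow ?\alpha\lor ?\beta$; $?\bot\to 0$; $?\exists x\,\alpha(x)\leftrightarrow\exists x\,?\alpha(x)$; $?\forall x\,\alpha(x)\to\forall x\,?\alpha(x)$. (Hence QHC and QHC$^-$ have the same derivable rules.) (b) In QHC: $!p\land !q\Leftrightarrow\, !(p\land q)$; $!p\lor !q\Rightarrow\, !(p\lor q)$; $\forall x\,!p(x)\Leftrightarrow\, !\forall x\,p(x)$; $\exists x\,!p(x)\Rightarrow\, !\exists x\,p(x)$.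
   Context: QHC is a two-sorted first-order calculus. Its only terms are individual variables. Every formula is either a problem (denoted by Greek letters $\alpha,\beta,\gamma,\dots$) or a proposition (denoted by Latin letters $p,q,\dots$). Atomic formulas are proposition variables $p(t_1,\dots,t_n)$ (of proposition type), problem variables $\pi(t_1,\dots,t_n)$ (of problem type), and the constants $0$ (a proposition, classical falsity) and $\bot$ (a problem, intuitionistic absurdity). Propositions are closed under the classical connectives $\land,\lor,\to$ and quantifiers $\exists,\forall$; problems are closed under the intuitionistic connectives $\land,\lor,\to$ and quantifiers $\exists,\forall$ (the same symbols are used, distinguished by the type of the arguments). $\neg p$ abbreviates $p\to 0$, $\neg\alpha$ abbreviates $\alpha\to\bot$, and $\leftrightarrow$ is defined as usual. There are two type-conversion operators: if $p$ is a proposition then $!p$ is a problem, and if $\alpha$ is a problem then $?\alpha$ is a proposition. Deductive system of QHC: all axioms and rules of classical predicate logic applied to all propositions; all postulates and rules of intuitionistic predicate logic applied to all problems; the rules $p\,/\,!p$ and $\alpha\,/\,?\alpha$; and the schemas $?!p\to p$; $\alpha\to\, !?\alpha$; $!(p\to q)\to(!p\to !q)$; $?(\alpha\to\beta)\to(?\alpha\to ?\beta)$; $!0\to\bot$; $?(\alpha\land\beta)\leftrightarrow ?\alpha\land ?\beta$; $?(\alpha\lor\beta)\leftrightarrow ?\alpha\lor ?\beta$; $?\bot\to 0$; $?\exists x\,\alpha(x)\leftrightarrow\exists x\,?\alpha(x)$; $?\forall x\,\alpha(x)\to\forall x\,?\alpha(x)$ (usual variable side conditions implicit). $\vdash A$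 means $A$ is derivable in QHC; $A\Rightarrow B$ means $\vdash A\to B$ and $A\Leftrightarrow B$ means $\vdash A\leftrightarrow B$ (with $A,B$ of the same type); $A\vdash B$ means $B$ is derivable in QHC from the premise $A$. Notation: $\Box p := ?!p$ (a proposition) and $\nabla\alpha := !?\alpha$ (a problem). QC and QH denote classical and intuitionistic predicate calculus. *)

From Stdlib Require Import Bool List Arith.
Import ListNotations.

(* Individual variables are natural numbers; the only terms are variables. *)
Definition ivar := nat.

(* Propositions (classical sort) and problems (intuitionistic sort). *)
Inductive prop : Type :=
| PVar  : nat -> list ivar -> prop
| PFalse : prop
| PAnd  : prop -> prop -> prop
| POr   : prop -> prop -> prop
| PImp  : prop -> prop -> prop
| PEx   : ivar -> prop -> prop
| PAll  : ivar -> prop -> prop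
| PQ    : prob -> prop                     (* ?alpha *)
with prob : Type :=
| AVar  : nat -> list ivar -> prob
| ABot  : prob
| AAnd  : prob -> prob -> prob
| AOr   : prob -> prob -> prob
| AImp  : prob -> prob -> prob
| AEx   : ivar -> prob -> prob
| AAll  : ivar -> prob -> prob
| AB    : prop -> prob.                    (* !p *)

Definition PNeg (p : prop) : prop := PImp p PFalse.
Definition ANeg (a : prob) : prob := AImp a ABot.
Definition PIff (p q : prop) : prop := PAnd (PImp p q) (PImp q p).
Definition AIff (a b : prob) : prob := AAnd (AImp a b) (AImp b a).

Fixpoint freeP (x : ivar) (p : prop) : bool :=
  match p with
  | PVar _ ts => existsb (Nat.eqb x) ts
  | PFalse => false
  | PAnd p1 p2 | POr p1 p2 | PImp p1 p2 => freeP x p1 || freeP x p2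
  | PEx z p1 | PAll z p1 => negb (Nat.eqb x z) && freeP x p1
  | PQ a => freeA x a
  end
with freeA (x : ivar) (a : prob) : bool :=
  match a with
  | AVar _ ts => existsb (Nat.eqb x) ts
  | ABot => false
  | AAnd a1 a2 | AOr a1 a2 | AImp a1 a2 => freeA x a1 || freeA x a2
  | AEx z a1 | AAll z a1 => negb (Nat.eqb x z) && freeA x a1
  | AB p => freeP x p
  end.

Definition substV (x y : ivar) (t : ivar) : ivar := if Nat.eqb t x then y else t.

(* Replace the free occurrences of x by y (no renaming; used only under the
   side condition "y is free for x"). *)
Fixpoint substP (x y : ivar) (p : prop) : prop :=
  match p with
  | PVar i ts => PVar i (map (substV x y) ts)
  | PFalse => PFalse
  | PAnd p1 p2 => PAnd (substP x y p1) (substP x y p2)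
  | POr p1 p2 => POr (substP x y p1) (substP x y p2)
  | PImp p1 p2 => PImp (substP x y p1) (substP x y p2)
  | PEx z p1 => if Nat.eqb z x then PEx z p1 else PEx z (substP x y p1)
  | PAll z p1 => if Nat.eqb z x then PAll z p1 else PAll z (substP x y p1)
  | PQ a => PQ (substA x y a)
  end
with substA (x y : ivar) (a : prob) : prob :=
  match a with
  | AVar i ts => AVar i (map (substV x y) ts)
  | ABot => ABot
  | AAnd a1 a2 => AAnd (substA x y a1) (substA x y a2)
  | AOr a1 a2 => AOr (substA x y a1) (substA x y a2)
  | AImp a1 a2 => AImp (substA x y a1) (substA x y a2)
  | AEx z a1 => if Nat.eqb z x then AEx z a1 else AEx z (substA x y a1)
  | AAll z a1 => if Nat.eqb z x then AAll z a1 else AAll z (substA x y a1)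
  | AB p => AB (substP x y p)
  end.

Fixpoint free_forP (y x : ivar) (p : prop) : bool :=
  match p with
  | PVar _ _ | PFalse => true
  | PAnd p1 p2 | POr p1 p2 | PImp p1 p2 => free_forP y x p1 && free_forP y x p2
  | PEx z p1 | PAll z p1 =>
      negb (freeP x p) || (negb (Nat.eqb z y) && free_forP y x p1)
  | PQ a => free_forA y x a
  end
with free_forA (y x : ivar) (a : prob) : bool :=
  match a with
  | AVar _ _ | ABot => true
  | AAnd a1 a2 | AOr a1 a2 | AImp a1 a2 => free_forA y x a1 && free_forA y x a2
  | AEx z a1 | AAll z a1 =>
      negb (freeA x a) || (negb (Nat.eqb z y) && free_forA y x a1)
  | AB p => free_forP y x p
  end.

(* Derivability.  [full = true]: QHC;  [full = false]: QHC^- .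
   [HP], [HA]: premises (additional non-logical axioms) of each sort.
   Classical / intuitionistic predicate logic is given by Kleene's Hilbert system
   (intuitionistic part + double negation elimination for propositions). *)
Inductive DP (full : bool) (HP : prop -> Prop) (HA : prob -> Prop) : prop -> Prop :=
| P_hyp   : forall p, HP p -> DP full HP HA p
| P_K     : forall p q, DP full HP HA (PImp p (PImp q p))
| P_S     : forall p q r,
    DP full HP HA (PImp (PImp p (PImp q r)) (PImp (PImp p q) (PImp p r)))
| P_AndE1 : forall p q, DP full HP HA (PImp (PAnd p q) p)
| P_AndE2 : forall p q, DP full HP HA (PImp (PAnd p q) q)
| P_AndI  : forall p q, DP full HP HA (PImp p (PImp q (PAnd p q)))
| P_OrI1  : forall p q, DP full HP HA (PImp p (POr p q))
| P_OrI2  : forall p q, DP full HP HA (PImp q (POr p q))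
| P_OrE   : forall p q r,
    DP full HP HA (PImp (PImp p r) (PImp (PImp q r) (PImp (POr p q) r)))
| P_EFQ   : forall p, DP full HP HA (PImp PFalse p)
| P_DNE   : forall p, DP full HP HA (PImp (PNeg (PNeg p)) p)
| P_AllE  : forall x y p, free_forP y x p = true ->
    DP full HP HA (PImp (PAll x p) (substP x y p))
| P_ExI   : forall x y p, free_forP y x p = true ->
    DP full HP HA (PImp (substP x y p) (PEx x p))
| P_MP    : forall p q, DP full HP HA (PImp p q) -> DP full HP HA p -> DP full HP HA q
| P_AllI  : forall x p q, freeP x q = false ->
    DP full HP HA (PImp q p) -> DP full HP HA (PImp q (PAll x p))
| P_ExE   : forall x p q, freeP x q = false ->
    DP full HP HA (PImp p q) -> DP full HP HA (PImp (PEx x p) q)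
| P_Q     : forall a, DA full HP HA a -> DP full HP HA (PQ a)
| P_QB    : forall p, DP full HP HA (PImp (PQ (AB p)) p)
| P_QK    : forall a b,
    DP full HP HA (PImp (PQ (AImp a b)) (PImp (PQ a) (PQ b)))
| P_QAnd  : forall a b, full = true ->
    DP full HP HA (PIff (PQ (AAnd a b)) (PAnd (PQ a) (PQ b)))
| P_QOr   : forall a b, full = true ->
    DP full HP HA (PIff (PQ (AOr a b)) (POr (PQ a) (PQ b)))
| P_QBot  : full = true -> DP full HP HA (PImp (PQ ABot) PFalse)
| P_QEx   : forall x a, full = true ->
    DP full HP HA (PIff (PQ (AEx x a)) (PEx x (PQ a)))
| P_QAll  : forall x a, full = true ->
    DP full HP HA (PImp (PQ (AAll x a)) (PAll x (PQ a)))
with DA (full : bool) (HP : prop -> Prop) (HA : prob -> Prop) : prob -> Prop :=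
| A_hyp   : forall a, HA a -> DA full HP HA a
| A_K     : forall a b, DA full HP HA (AImp a (AImp b a))
| A_S     : forall a b c,
    DA full HP HA (AImp (AImp a (AImp b c)) (AImp (AImp a b) (AImp a c)))
| A_AndE1 : forall a b, DA full HP HA (AImp (AAnd a b) a)
| A_AndE2 : forall a b, DA full HP HA (AImp (AAnd a b) b)
| A_AndI  : forall a b, DA full HP HA (AImp a (AImp b (AAnd a b)))
| A_OrI1  : forall a b, DA full HP HA (AImp a (AOr a b))
| A_OrI2  : forall a b, DA full HP HA (AImp b (AOr a b))
| A_OrE   : forall a b c,
    DA full HP HA (AImp (AImp a c) (AImp (AImp b c) (AImp (AOr a b) c)))
| A_EFQ   : forall a, DA full HP HA (AImp ABot a)
| A_AllE  : forall x y a, free_forA y x a = true ->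
    DA full HP HA (AImp (AAll x a) (substA x y a))
| A_ExI   : forall x y a, free_forA y x a = true ->
    DA full HP HA (AImp (substA x y a) (AEx x a))
| A_MP    : forall a b, DA full HP HA (AImp a b) -> DA full HP HA a -> DA full HP HA b
| A_AllI  : forall x a b, freeA x b = false ->
    DA full HP HA (AImp b a) -> DA full HP HA (AImp b (AAll x a))
| A_ExE   : forall x a b, freeA x b = false ->
    DA full HP HA (AImp a b) -> DA full HP HA (AImp (AEx x a) b)
| A_B     : forall p, DP full HP HA p -> DA full HP HA (AB p)
| A_BQ    : forall a, DA full HP HA (AImp a (AB (PQ a)))
| A_BK    : forall p q,
    DA full HP HA (AImp (AB (PImp p q)) (AImp (AB p) (AB q)))
| A_B0    : DA full HP HA (AImp (AB PFalse) ABot).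

Definition noP : prop -> Prop := fun _ => False.
Definition noA : prob -> Prop := fun _ => False.

Definition QHC_P (p : prop) : Prop := DP true noP noA p.
Definition QHC_A (a : prob) : Prop := DA true noP noA a.
Definition QHCm_P (p : prop) : Prop := DP false noP noA p.
Definition QHCm_A (a : prob) : Prop := DA false noP noA a.

From Stdlib Require Import Bool List Arith.

(* The key observation is that the conversion operators form a Galois
   connection: for every problem a and proposition p,
       a -> !p  is derivable   iff   ?a -> p  is derivable,
   using only the QHC^- schemas  a -> !?a,  ?!p -> p  and the monotonicity
   of ? and ! (from the rules p / !p, a / ?a and the K-schemas for ! and ?).
   Being a left adjoint, ? commutes with disjunction, falsity and existential
   quantification; the remaining schemas (conjunction, universal
   quantification) follow from the monotonicity of ? and its K-schema.

   In part (b) the only nontrivial case is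
   forall x !p => !forall x p, which goes through ?forall x a -> forall x ?a. *)

Scheme DP_mut := Induction for DP Sort Prop
with DA_mut := Induction for DA Sort Prop.
Scheme prop_mut := Induction for prop Sort Prop
with prob_mut := Induction for prob Sort Prop.

Lemma substV_self (x t : ivar) : substV x x t = t.
Proof. unfold substV; destruct (Nat.eqb_spec t x); subst; reflexivity. Qed.

Lemma map_substV_self (x : ivar) (ts : list ivar) : map (substV x x) ts = ts.
Proof. induction ts as [|t ts IH]; simpl; rewrite ?substV_self, ?IH; reflexivity. Qed.

Lemma subst_self (x : ivar) :
  (forall p, substP x x p = p) /\ (forall a, substA x x a = a).
Proof.
  set (P := fun p => substP x x p = p); set (A := fun a => substA x x a = a).
  assert (Hp : forall p, P p) by
    (apply (prop_mut P A); unfold P, A; intros; simpl;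
     rewrite ?map_substV_self; try congruence;
     destruct (Nat.eqb _ x); congruence).
  assert (Ha : forall a, A a) by
    (apply (prob_mut P A); unfold P, A; intros; simpl;
     rewrite ?map_substV_self; try congruence;
     destruct (Nat.eqb _ x); congruence).
  split; assumption.
Qed.

Lemma free_for_self (x : ivar) :
  (forall p, free_forP x x p = true) /\ (forall a, free_forA x x a = true).
Proof.
  set (P := fun p => free_forP x x p = true);
  set (A := fun a => free_forA x x a = true).
  assert (Hp : forall p, P p) by
    (apply (prop_mut P A); unfold P, A; intros; simpl; rewrite ?H, ?H0; auto;
     rewrite (Nat.eqb_sym _ x); destruct (Nat.eqb x _); simpl; auto;
     apply orb_true_r).
  assert (Ha : forall a, A a) by
    (apply (prob_mut P A); unfold P, A; intros; simpl; rewrite ?H, ?H0; auto;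
     rewrite (Nat.eqb_sym _ x); destruct (Nat.eqb x _); simpl; auto;
     apply orb_true_r).
  split; assumption.
Qed.

Lemma not_free_PAll (x : ivar) (p : prop) : freeP x (PAll x p) = false.
Proof. simpl; rewrite Nat.eqb_refl; reflexivity. Qed.

Lemma not_free_PEx (x : ivar) (p : prop) : freeP x (PEx x p) = false.
Proof. simpl; rewrite Nat.eqb_refl; reflexivity. Qed.

Lemma not_free_AAll (x : ivar) (a : prob) : freeA x (AAll x a) = false.
Proof. simpl; rewrite Nat.eqb_refl; reflexivity. Qed.

Lemma not_free_AEx (x : ivar) (a : prob) : freeA x (AEx x a) = false.
Proof. simpl; rewrite Nat.eqb_refl; reflexivity. Qed.

Section Derived.

Variable full : bool.
Variable HP : prop -> Prop.
Variable HA : prob -> Prop.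

Local Notation "|-P p" := (DP full HP HA p) (at level 70).
Local Notation "|-A a" := (DA full HP HA a) (at level 70).

Lemma P_AllE_self (x : ivar) (p : prop) : |-P PImp (PAll x p) p.
Proof.
  pose proof (P_AllE full HP HA x x p) as H.
  rewrite (proj1 (subst_self x)), (proj1 (free_for_self x)) in H; auto.
Qed.

Lemma P_ExI_self (x : ivar) (p : prop) : |-P PImp p (PEx x p).
Proof.
  pose proof (P_ExI full HP HA x x p) as H.
  rewrite (proj1 (subst_self x)), (proj1 (free_for_self x)) in H; auto.
Qed.

Lemma A_AllE_self (x : ivar) (a : prob) : |-A AImp (AAll x a) a.
Proof.
  pose proof (A_AllE full HP HA x x a) as H.
  rewrite (proj2 (subst_self x)), (proj2 (free_for_self x)) in H; auto.
Qed.

Lemma A_ExI_self (x : ivar) (a : prob) : |-A AImp a (AEx x a).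
Proof.
  pose proof (A_ExI full HP HA x x a) as H.
  rewrite (proj2 (subst_self x)), (proj2 (free_for_self x)) in H; auto.
Qed.

Lemma P_weaken (p q : prop) : |-P q -> |-P PImp p q.
Proof. intro H; eapply P_MP; [apply P_K | exact H]. Qed.

Lemma A_weaken (a b : prob) : |-A b -> |-A AImp a b.
Proof. intro H; eapply A_MP; [apply A_K | exact H]. Qed.

Lemma P_S_rule (p q r : prop) :
  |-P PImp p (PImp q r) -> |-P PImp p q -> |-P PImp p r.
Proof. intros H1 H2; eapply P_MP; [eapply P_MP; [apply P_S | exact H1] | exact H2]. Qed.

Lemma A_S_rule (a b c : prob) :
  |-A AImp a (AImp b c) -> |-A AImp a b -> |-A AImp a c.
Proof. intros H1 H2; eapply A_MP; [eapply A_MP; [apply A_S | exact H1] | exact H2]. Qed.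

Lemma P_trans (p q r : prop) : |-P PImp p q -> |-P PImp q r -> |-P PImp p r.
Proof. intros H1 H2; apply (P_S_rule _ q); [apply P_weaken, H2 | exact H1]. Qed.

Lemma A_trans (a b c : prob) : |-A AImp a b -> |-A AImp b c -> |-A AImp a c.
Proof. intros H1 H2; apply (A_S_rule _ b); [apply A_weaken, H2 | exact H1]. Qed.

Lemma P_and_intro (p q r : prop) :
  |-P PImp p q -> |-P PImp p r -> |-P PImp p (PAnd q r).
Proof. intros H1 H2; apply (P_S_rule _ r); [eapply P_trans; [exact H1 | apply P_AndI] | exact H2]. Qed.

Lemma A_and_intro (a b c : prob) :
  |-A AImp a b -> |-A AImp a c -> |-A AImp a (AAnd b c).
Proof. intros H1 H2; apply (A_S_rule _ c); [eapply A_trans; [exact H1 | apply A_AndI] | exact H2]. Qed.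

Lemma P_uncurry (p q r : prop) : |-P PImp p (PImp q r) -> |-P PImp (PAnd p q) r.
Proof. intro H; apply (P_S_rule _ q); [eapply P_trans; [apply P_AndE1 | exact H] | apply P_AndE2]. Qed.

Lemma A_uncurry (a b c : prob) : |-A AImp a (AImp b c) -> |-A AImp (AAnd a b) c.
Proof. intro H; apply (A_S_rule _ b); [eapply A_trans; [apply A_AndE1 | exact H] | apply A_AndE2]. Qed.

Lemma P_or_elim (p q r : prop) :
  |-P PImp p r -> |-P PImp q r -> |-P PImp (POr p q) r.
Proof. intros H1 H2; eapply P_MP; [eapply P_MP; [apply P_OrE | exact H1] | exact H2]. Qed.

Lemma A_or_elim (a b c : prob) :
  |-A AImp a c -> |-A AImp b c -> |-A AImp (AOr a b) c.
Proof. intros H1 H2; eapply A_MP; [eapply A_MP; [apply A_OrE | exact H1] | exact H2]. Qed.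

Lemma P_iff_intro (p q : prop) : |-P PImp p q -> |-P PImp q p -> |-P PIff p q.
Proof. intros H1 H2; eapply P_MP; [eapply P_MP; [apply P_AndI | exact H1] | exact H2]. Qed.

Lemma A_iff_intro (a b : prob) : |-A AImp a b -> |-A AImp b a -> |-A AIff a b.
Proof. intros H1 H2; eapply A_MP; [eapply A_MP; [apply A_AndI | exact H1] | exact H2]. Qed.

Lemma Q_mono (a b : prob) : |-A AImp a b -> |-P PImp (PQ a) (PQ b).
Proof. intro H; eapply P_MP; [apply P_QK | apply P_Q, H]. Qed.

Lemma Q_mono2 (a b c : prob) :
  |-A AImp a (AImp b c) -> |-P PImp (PQ a) (PImp (PQ b) (PQ c)).
Proof. intro H; eapply P_trans; [apply Q_mono, H | apply P_QK]. Qed.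

Lemma B_mono (p q : prop) : |-P PImp p q -> |-A AImp (AB p) (AB q).
Proof. intro H; eapply A_MP; [apply A_BK | apply A_B, H]. Qed.

Lemma B_mono2 (p q r : prop) :
  |-P PImp p (PImp q r) -> |-A AImp (AB p) (AImp (AB q) (AB r)).
Proof. intro H; eapply A_trans; [apply B_mono, H | apply A_BK]. Qed.

Lemma Q_of_B (a : prob) (p : prop) : |-A AImp a (AB p) -> |-P PImp (PQ a) p.
Proof. intro H; eapply P_trans; [apply Q_mono, H | apply P_QB]. Qed.

Lemma B_of_Q (a : prob) (p : prop) : |-P PImp (PQ a) p -> |-A AImp a (AB p).
Proof. intro H; eapply A_trans; [apply A_BQ | apply B_mono, H]. Qed.

Lemma Q_and (a b : prob) : |-P PIff (PQ (AAnd a b)) (PAnd (PQ a) (PQ b)).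
Proof.
  apply P_iff_intro.
  - apply P_and_intro; apply Q_mono; [apply A_AndE1 | apply A_AndE2].
  - apply P_uncurry, Q_mono2, A_AndI.
Qed.

Lemma Q_or (a b : prob) : |-P PIff (PQ (AOr a b)) (POr (PQ a) (PQ b)).
Proof.
  apply P_iff_intro.
  - apply Q_of_B, A_or_elim; apply B_of_Q; [apply P_OrI1 | apply P_OrI2].
  - apply P_or_elim; apply Q_mono; [apply A_OrI1 | apply A_OrI2].
Qed.

Lemma Q_bot : |-P PImp (PQ ABot) PFalse.
Proof. apply Q_of_B, A_EFQ. Qed.

Lemma Q_ex (x : ivar) (a : prob) : |-P PIff (PQ (AEx x a)) (PEx x (PQ a)).
Proof.
  apply P_iff_intro.
  - apply Q_of_B, A_ExE; [exact (not_free_PEx x (PQ a)) |].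
    apply B_of_Q, P_ExI_self.
  - apply P_ExE; [exact (not_free_AEx x a) |].
    apply Q_mono, A_ExI_self.
Qed.

Lemma Q_all (x : ivar) (a : prob) : |-P PImp (PQ (AAll x a)) (PAll x (PQ a)).
Proof.
  apply P_AllI; [exact (not_free_AAll x a) |].
  apply Q_mono, A_AllE_self.
Qed.

Lemma B_and (p q : prop) : |-A AIff (AAnd (AB p) (AB q)) (AB (PAnd p q)).
Proof.
  apply A_iff_intro.
  - apply A_uncurry, B_mono2, P_AndI.
  - apply A_and_intro; apply B_mono; [apply P_AndE1 | apply P_AndE2].
Qed.

Lemma B_or (p q : prop) : |-A AImp (AOr (AB p) (AB q)) (AB (POr p q)).
Proof. apply A_or_elim; apply B_mono; [apply P_OrI1 | apply P_OrI2]. Qed.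

Lemma B_all (x : ivar) (p : prop) : |-A AIff (AAll x (AB p)) (AB (PAll x p)).
Proof.
  apply A_iff_intro.
  - (* ?forall x !p -> forall x ?!p -> forall x p *)
    apply B_of_Q; eapply P_trans; [apply Q_all |].
    apply P_AllI; [exact (not_free_AAll x (AB p)) |].
    eapply P_trans; [apply P_AllE_self | apply P_QB].
  - apply A_AllI; [exact (not_free_PAll x p) |].
    apply B_mono, P_AllE_self.
Qed.

Lemma B_ex (x : ivar) (p : prop) : |-A AImp (AEx x (AB p)) (AB (PEx x p)).
Proof.
  apply A_ExE; [exact (not_free_PEx x p) |].
  apply B_mono, P_ExI_self.
Qed.

End Derived.

(* QHC and QHC^- derive the same formulas from the same premises: every
   QHC-specific axiom is derivable in QHC^- (part (a)), and conversely every
   QHC^- derivation is literally a QHC derivation. *)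

Lemma QHC_conservative (HP : prop -> Prop) (HA : prob -> Prop) :
  (forall p, DP true HP HA p <-> DP false HP HA p) /\
  (forall a, DA true HP HA a <-> DA false HP HA a).
Proof.
  set (Pm := fun p (_ : DP true HP HA p) => DP false HP HA p).
  set (Am := fun a (_ : DA true HP HA a) => DA false HP HA a).
  set (Pf := fun p (_ : DP false HP HA p) => DP true HP HA p).
  set (Af := fun a (_ : DA false HP HA a) => DA true HP HA a).
  assert (to_minus : (forall p d, Pm p d) /\ (forall a d, Am a d)).
  { split; [apply (DP_mut true HP HA Pm Am) | apply (DA_mut true HP HA Pm Am)];
    unfold Pm, Am; intros;
    first [ apply Q_and | apply Q_or | apply Q_bot | apply Q_ex | apply Q_all
          | solve [econstructor; eauto] ]. }
  assert (to_full : (forall p d, Pf p d) /\ (forall a d, Af a d)).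
  { split; [apply (DP_mut false HP HA Pf Af) | apply (DA_mut false HP HA Pf Af)];
    unfold Pf, Af; intros; first [ discriminate | solve [econstructor; eauto] ]. }
  destruct to_minus as [Hp Ha], to_full as [Hp' Ha'].
  split; intros; split; [apply Hp | apply Hp' | apply Ha | apply Ha']; assumption.
Qed.

Theorem proposition2p5 :
  ((forall a b : prob, QHCm_P (PIff (PQ (AAnd a b)) (PAnd (PQ a) (PQ b)))) /\
   (forall a b : prob, QHCm_P (PIff (PQ (AOr a b)) (POr (PQ a) (PQ b)))) /\
   QHCm_P (PImp (PQ ABot) PFalse) /\
   (forall (x : ivar) (a : prob), QHCm_P (PIff (PQ (AEx x a)) (PEx x (PQ a)))) /\
   (forall (x : ivar) (a : prob), QHCm_P (PImp (PQ (AAll x a)) (PAll x (PQ a)))) /\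
   (forall (HP : prop -> Prop) (HA : prob -> Prop),
      (forall p, DP true HP HA p <-> DP false HP HA p) /\
      (forall a, DA true HP HA a <-> DA false HP HA a))) /\
  ((forall p q : prop, QHC_A (AIff (AAnd (AB p) (AB q)) (AB (PAnd p q)))) /\
   (forall p q : prop, QHC_A (AImp (AOr (AB p) (AB q)) (AB (POr p q)))) /\
   (forall (x : ivar) (p : prop), QHC_A (AIff (AAll x (AB p)) (AB (PAll x p)))) /\
   (forall (x : ivar) (p : prop), QHC_A (AImp (AEx x (AB p)) (AB (PEx x p))))).
Proof.
  unfold QHCm_P, QHC_A.
  split; [split; [|split; [|split; [|split; [|split]]]] |].
  - exact (Q_and false noP noA).
  - exact (Q_or false noP noA).
  - exact (Q_bot false noP noA).
  - exact (Q_ex false noP noA).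
  - exact (Q_all false noP noA).
  - exact QHC_conservative.
  - repeat split.
    + exact (B_and true noP noA).
    + exact (B_or true noP noA).
    + exact (B_all true noP noA).
    + exact (B_ex true noP noA).
Qed.
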